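(* Let $\hat P=\mathrm{Spec}(B)\not\simeq S\times\mathbb{G}_a$ be an affine extension of the trivial bundle $S_*\times\mathbb{G}_a$ to which the vertical $\mathbb{G}_m$-action extends. Then $B=\mathcal O(S)\oplus\bigoplus_{\nu\ge1}\mathfrak m_\nu t^\nu\subset\mathcal O(S)[t]$ for a decreasing sequence $(\mathfrak m_\nu)_{\nu\ge1}$ of $\mathfrak m_{\mathbf x}$-primary ideals of $\mathcal O(S)$. Consequently (Corollary) $\hat P$ is of the second kind.
   Context: All varieties are over $\mathbb{C}$. $S$ is a normal affine surface, $\mathbf{x}\in S$ a closed regular point with maximal ideal $\mathfrak m_{\mathbf x}\subset\mathcal O(S)$, $S_*=S\setminus\{\mathbf{x}\}$. An affine extension of a principal $\mathbb{G}_a$-bundle $\pi\colon P\to S_*$ is a normal affine $\mathbb{G}_a$-variety $\hat P=\mathrm{Spec}(B)$ with a morphism $\hat\pi\colon\hat P\to S$ and a $\mathbb{G}_a$-equivariant dominant open embedding $\iota\colon P\hookrightarrow\hat P$ with $\iota(P)=\hat\pi^{-1}(S_* )$ and $\hat\pi\circ\iota=\pi$; $B\subset\mathcal O(P)$ via $\iota^*$. For $P=S_*\times\mathbb{G}_a$ (translation action), $\mathcal O(P)=\mathcal O(S)[t]$; the vertical $\mathbb{G}_m$-action is $\lambda\cdot(s,t)=(s,\lambda t)$. The extension is of the second kind if the morphism $j\colon S\times\mathbb G_a\to\hat P$ with $j^*=\iota^*$ maps $\{\mathbf x\}\times\mathbb G_a$ to a point. *)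

From HB Require Import structures.
From mathcomp Require Import all_boot all_order all_algebra.
From mathcomp Require Import fraction.
From mathcomp Require Import complex.
From mathcomp Require Import reals.
Set Implicit Arguments.
Unset Strict Implicit.
Unset Printing Implicit Defensive.
Import Order.TTheory GRing.Theory Num.Theory.
Local Open Scope ring_scope.

(* The base field: C := R[i] for a complete archimedean real field R,
   i.e. (a copy of) the complex numbers. *)

Section CommAlg.
Variable T : comNzRingType.

Definition is_ideal (I : T -> Prop) : Prop :=
  I 0 /\ (forall x y, I x -> I y -> I (x + y)) /\ (forall a x, I x -> I (a * x)).

Definition is_prime (P : T -> Prop) : Prop :=
  is_ideal P /\ ~ P 1 /\ (forall x y, P (x * y) -> P x \/ P y).

Definition is_maximal (M : T -> Prop) : Prop :=
  is_ideal M /\ ~ M 1 /\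
  (forall J : T -> Prop, is_ideal J -> ~ J 1 -> (forall x, M x -> J x) ->
     forall x, J x -> M x).

Definition is_primary_to (M Q : T -> Prop) : Prop :=
  is_ideal Q /\ ~ Q 1 /\
  (forall x y, Q (x * y) -> Q x \/ exists n, Q (y ^+ n)) /\
  (forall a, M a <-> exists n, Q (a ^+ n)).

Definition strict_incl (P Q : T -> Prop) : Prop :=
  (forall x, P x -> Q x) /\ exists x, Q x /\ ~ P x.

Definition prime_chain (n : nat) (c : nat -> T -> Prop) : Prop :=
  (forall i, (i <= n)%N -> is_prime (c i)) /\
  (forall i, (i < n)%N -> strict_incl (c i) (c i.+1)).

Definition krull_dim (d : nat) : Prop :=
  (exists c, prime_chain d c) /\ (forall n c, prime_chain n c -> (n <= d)%N).

Definition height (P : T -> Prop) (d : nat) : Prop :=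
  (exists c, prime_chain d c /\ forall x, c d x <-> P x) /\
  (forall n c, prime_chain n c -> (forall x, c n x <-> P x) -> (n <= d)%N).

(* the local ring T_M is a regular local ring: its maximal ideal M T_M is
   generated by (height M) elements *)
Definition regular_at (M : T -> Prop) : Prop :=
  is_maximal M /\
  exists d, height M d /\
  exists us : seq T, size us = d /\ (forall u, u \in us -> M u) /\
    forall a, M a -> exists s (cs : seq T), ~ M s /\ size cs = d /\
      s * a = \sum_(i < d) cs`_i * us`_i.

Definition is_subring (B : T -> Prop) : Prop :=
  B 1 /\ (forall x y, B x -> B y -> B (x - y)) /\
  (forall x y, B x -> B y -> B (x * y)).

End CommAlg.

Inductive alg_gen (K : nzRingType) (T : nzRingType) (f : K -> T) (s : seq T) :
    T -> Prop :=
  | ag_const c : alg_gen f s (f c)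
  | ag_elt x : x \in s -> alg_gen f s x
  | ag_add x y : alg_gen f s x -> alg_gen f s y -> alg_gen f s (x + y)
  | ag_opp x : alg_gen f s x -> alg_gen f s (- x)
  | ag_mul x y : alg_gen f s x -> alg_gen f s y -> alg_gen f s (x * y).

(* the subset B (assumed a subalgebra) is a finitely generated K-algebra *)
Definition fin_gen (K T : nzRingType) (f : K -> T) (B : T -> Prop) : Prop :=
  exists s : seq T, (forall x, x \in s -> B x) /\ forall x, B x -> alg_gen f s x.

Definition normal_domain (A : idomainType) : Prop :=
  forall z : {fraction A},
    (exists p : {poly A}, p \is monic /\ root (map_poly (@FracField.tofrac _) p) z) ->
    exists a : A, z = FracField.tofrac a.

(* a subring B of A[t] is normal: every element of Frac(A[t]) (= Frac(B) in
   our situation) integral over B lies in B *)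
Definition normal_subring (A : idomainType) (B : {poly A} -> Prop) : Prop :=
  forall z : {fraction {poly A}},
    (exists p : {poly {poly A}}, p \is monic /\ (forall i, B p`_i) /\
        root (map_poly (@FracField.tofrac _) p) z) ->
    exists b, B b /\ z = FracField.tofrac b.

(** O(S) = A (a C-algebra via iota), x <-> maximal ideal m,
   O(S_star x G_a) = O(S)[t] = {poly A} (Hartogs, S normal),
   hat P = Spec B with B a subring of {poly A}. *)

Definition normal_affine_surface_with_point (R : realType) (A : idomainType)
    (iota : {rmorphism R[i] -> A}) (m : A -> Prop) : Prop :=
  fin_gen iota (fun _ => True) /\ normal_domain A /\ krull_dim A 2 /\
  regular_at m.

Definition affine_extension (R : realType) (A : idomainType)
    (iota : {rmorphism R[i] -> A}) (m : A -> Prop) (B : {poly A} -> Prop) : Prop :=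
  (* B is a C-subalgebra of O(P)=A[t] containing A (the morphism hat pi) *)
  is_subring B /\ (forall a : A, B a%:P) /\
  (* hat P is an affine variety: B finitely generated over C *)
  fin_gen (fun c => (iota c)%:P) B /\
  normal_subring B /\
  (* G_a-stable: B is invariant under the translations t |-> t + c *)
  (forall c : R[i], forall p, B p -> B (p \Po ('X + (iota c)%:P))) /\
  (* iota is an open embedding onto hat pi^{-1}(S_star) : B_f = A_f[t] for all
     f in m (the D(f), f in m, cover S_star) *)
  (forall f, m f -> forall p : {poly A}, exists n, B ((f ^+ n)%:P * p)).

(* the vertical G_m-action lambda.(s,t) = (s, lambda t) extends to hat P *)
Definition vertical_Gm_extends (R : realType) (A : idomainType)
    (iota : {rmorphism R[i] -> A}) (B : {poly A} -> Prop) : Prop :=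
  forall c : R[i], c != 0 -> forall p, B p -> B (p \Po ((iota c)%:P * 'X)).

(* second kind: j : S x G_a -> hat P contracts {x} x G_a to a point, i.e.
   every b in B restricted to {x} x G_a is constant in t, i.e. all the
   coefficients of t^nu (nu >= 1) of b lie in m *)
Definition second_kind (A : idomainType) (m : A -> Prop) (B : {poly A} -> Prop)
  : Prop :=
  forall b, B b -> forall nu, (0 < nu)%N -> m b`_nu.

From HB Require Import structures.
From mathcomp Require Import all_boot all_order all_algebra.
From mathcomp Require Import fraction complex reals.
From Stdlib Require Import Classical.
From mathcomp Require Import ring.
Import Order.TTheory GRing.Theory Num.Theory.
Set Implicit Arguments.
Unset Strict Implicit.
Local Open Scope ring_scope.

(** The vertical G_m-action makes B graded: the operator "scale t by 2" acts on
   t^nu by 2^nu, and these eigenvalues are pairwise distinct, so a polynomial in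
   the operator projects any b in B onto each homogeneous component b_nu t^nu,
   which therefore lies in B. Hence B = A (+) (+)_nu M_nu t^nu with
   M_nu = {a | a t^nu in B}. Invariance under t |-> t + 1 maps a t^(nu+1) to a
   polynomial whose t^nu-component is (nu+1) a t^nu, so M_(nu+1) <= M_nu. Each
   M_nu contains a power of every f in m (because B_f = A_f[t]) and misses 1
   (otherwise t in B and B = A[t]); an ideal whose radical contains the maximal
   ideal m and which is proper is m-primary. Finally b_nu in M_nu <= m for
   nu >= 1 says that B is of the second kind. *)

Section PrimaryToMaximal.
Variables (T : comNzRingType) (m Q : T -> Prop).
Hypotheses (m_max : is_maximal m) (Q_ideal : is_ideal Q).
Hypothesis m_rad : forall f, m f -> exists n, Q (f ^+ n).

Lemma exp_one_sub (z : T) n : exists g, (1 - z) ^+ n = 1 - z * g.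
Proof.
elim: n => [|n [g IH]]; first by exists 0; rewrite expr0 mulr0 subr0.
by exists (g + 1 - z * g); rewrite exprS IH; ring.
Qed.

Lemma ideal_one_sub_exp x : Q (1 - x) -> forall n, Q (1 - x ^+ n).
Proof.
have [Q0 [QD QM]] := Q_ideal; move=> Qx; elim=> [|n IH]; first by rewrite expr0 subrr.
have -> : 1 - x ^+ n.+1 = (1 - x ^+ n) + x ^+ n * (1 - x) by rewrite exprS; ring.
by apply: QD => //; apply: QM.
Qed.

(* Outside m, y is invertible modulo m + yT = T, hence modulo Q since the
   element of m involved has a power in Q. *)
Lemma invertible_mod_ideal y : ~ m y -> exists c, Q (1 - y * c).
Proof.
move=> my; have [[m0 [mD mM]] [_ m_maxl]] := m_max.
pose J x := exists f b, m f /\ x = f + y * b.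
have J_ideal : is_ideal J.
  split; first by exists 0, 0; rewrite mulr0 addr0.
  split=> [x1 x2 [f1 [b1 [m1 ->]]] [f2 [b2 [m2 ->]]] | a x [f [b [mf ->]]]].
    by exists (f1 + f2), (b1 + b2); split; [apply: mD | ring].
  by exists (a * f), (a * b); split; [exact: mM | ring].
have [f [b [mf def1]]] : J 1.
  apply: NNPP => J1; apply: my; apply: (m_maxl J J_ideal J1).
    by move=> x mx; exists x, 0; rewrite mulr0 addr0.
  by exists 0, 1; rewrite mulr1 add0r.
have [n Qfn] := m_rad mf.
have [g Eg] := exp_one_sub (y * b) n.
by exists (b * g); rewrite mulrA -Eg def1 addrK.
Qed.

Lemma primary_to_maximal : ~ Q 1 -> is_primary_to m Q.
Proof.
have [_ [QD QM]] := Q_ideal; move=> Q1; split=> //; split=> //; split.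
  move=> x y Qxy; have [my | my] := classic (m y); first by right; apply: m_rad.
  left; have [c Qc] := invertible_mod_ideal my.
  have -> : x = x * (1 - y * c) + c * (x * y) by ring.
  by apply: QD; apply: QM.
move=> a; split=> [|[n Qan]]; first exact: m_rad.
apply: NNPP => ma; have [c Qc] := invertible_mod_ideal ma.
apply: Q1; have -> : 1 = (1 - (a * c) ^+ n) + c ^+ n * a ^+ n by rewrite exprMn; ring.
by apply: QD; [exact: ideal_one_sub_exp | exact: QM].
Qed.

End PrimaryToMaximal.

Lemma coef_comp_scale (A : comNzRingType) (c : A) (p : {poly A}) n :
  (p \Po (c%:P * 'X))`_n = c ^+ n * p`_n.
Proof.
elim/poly_ind: p n => [|q a IH] n; first by rewrite comp_poly0 !coef0 mulr0.
rewrite comp_poly_MXaddC !coefD !coefC mulrA [_ * c%:P]mulrC -mulrA coefCM !coefMX.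
by case: n => [|n] /=; rewrite ?mulr0 ?expr0 ?mul1r // IH !addr0 mulrA -exprS.
Qed.

Lemma coef_XaddC1_exp (A : nzRingType) n k :
  (('X + 1) ^+ n : {poly A})`_k = 'C(n, k)%:R.
Proof.
elim: n k => [|n IH] k; first by rewrite expr0 coef1 bin0n; case: k.
rewrite exprSr mulrDr mulr1 coefD coefMX; case: k => [|k] /=.
  by rewrite add0r IH !bin0.
by rewrite !IH binS natrD addrC.
Qed.

Section GradedSubring.
Variables (K : numFieldType) (A : idomainType) (io : {rmorphism K -> A}).
Variable B : {poly A} -> Prop.
Hypotheses (B_subring : is_subring B) (B_const : forall a : A, B a%:P).

Lemma memB p q : B p -> B q -> B (p - q).
Proof. by have [_ [BB _]] := B_subring; apply: BB. Qed.

Lemma mem0 : B 0.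
Proof. by rewrite -(subrr 1); apply: memB; have [] := B_subring. Qed.

Lemma memD p q : B p -> B q -> B (p + q).
Proof.
move=> Bp Bq; rewrite -[q]opprK; apply: memB => //.
by rewrite -sub0r; apply: memB => //; exact: mem0.
Qed.

Lemma memM p q : B p -> B q -> B (p * q).
Proof. by have [_ [_ BM]] := B_subring; apply: BM. Qed.

Lemma mem_polyCM a p : B p -> B (a%:P * p).
Proof. by apply: memM. Qed.

Lemma mem_monomial_unscale (c : K) a n :
  c != 0 -> B ((a * io c)%:P * 'X^n) -> B (a%:P * 'X^n).
Proof.
move=> c0 /(mem_polyCM (io c^-1)).
by rewrite mulrA -polyCM mulrCA -rmorphM mulVf // rmorph1 mulr1.
Qed.

Lemma mem_of_homogeneous (p : {poly A}) :
  (forall nu, (0 < nu)%N -> B ((p`_nu)%:P * 'X^nu)) -> B p.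
Proof.
move=> Bhom; rewrite -[p]coefK poly_def; apply: (big_ind B) => //.
- exact: mem0.
- exact: memD.
case=> [[|nu] ?] _ /=; first by rewrite expr0 -mul_polyC mulr1.
by rewrite -mul_polyC; apply: Bhom.
Qed.

Hypothesis B_scale :
  forall c : K, c != 0 -> forall p, B p -> B (p \Po ((io c)%:P * 'X)).

(* The operator L - 2^k, where L scales t by 2; it multiplies t^i by 2^i - 2^k. *)
Definition weight_kill (k : nat) (q : {poly A}) : {poly A} :=
  q \Po ((io 2)%:P * 'X) - (io (2 ^+ k))%:P * q.

Definition weight_proj (ks : seq nat) (q : {poly A}) : {poly A} :=
  foldr weight_kill q ks.

Lemma coef_weight_proj ks q i :
  (weight_proj ks q)`_i = q`_i * io (\prod_(k <- ks) (2 ^+ i - 2 ^+ k)).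
Proof.
elim: ks => [|k ks IH] /=; first by rewrite big_nil rmorph1 mulr1.
rewrite /weight_kill coefB coef_comp_scale coefCM IH big_cons.
by rewrite rmorphM rmorphB !rmorphXn; ring.
Qed.

Lemma mem_weight_proj ks q : B q -> B (weight_proj ks q).
Proof.
elim: ks => [|k ks IH] Bq //=; apply: memB.
  by apply: B_scale; [rewrite pnatr_eq0 | exact: IH].
by apply: mem_polyCM; exact: IH.
Qed.

Lemma mem_homogeneous q nu : B q -> B ((q`_nu)%:P * 'X^nu).
Proof.
move=> Bq; set ks := [seq k <- iota 0 (size q) | k != nu].
set D : K := \prod_(k <- ks) (2 ^+ nu - 2 ^+ k).
have D0 : D != 0.
  rewrite prodf_seq_neq0; apply/allP => k; rewrite mem_filter => /andP[kn _] /=.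
  by rewrite subr_eq0 -!natrX eqr_nat eqn_exp2l // eq_sym.
apply: (mem_monomial_unscale D0).
have <- : weight_proj ks q = (q`_nu * io D)%:P * 'X^nu.
  apply/polyP => i; rewrite coef_weight_proj coefCM coefXn.
  have [->|inu] := eqVneq i nu; first by rewrite mulr1.
  rewrite mulr0; have [lt_i_q|le_q_i] := ltnP i (size q); last first.
    by rewrite nth_default // mul0r.
  rewrite (big_rem i) /=; first by rewrite subrr mul0r rmorph0 mulr0.
  by rewrite mem_filter inu mem_iota.
exact: mem_weight_proj.
Qed.

Hypothesis B_shift : forall (c : K) p, B p -> B (p \Po ('X + (io c)%:P)).

(* The t^nu-component of a (t + 1)^(nu+1) is (nu+1) a t^nu. *)
Lemma mem_monomial_pred a nu : B (a%:P * 'X^(nu.+1)) -> B (a%:P * 'X^nu).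
Proof.
move=> /(B_shift 1) /(@mem_homogeneous _ nu).
rewrite rmorph1 comp_polyM comp_polyC comp_Xn_poly coefCM coef_XaddC1_exp binSn.
rewrite -(rmorph_nat io); apply: mem_monomial_unscale.
by rewrite pnatr_eq0.
Qed.

Definition coef_ideal (nu : nat) (a : A) : Prop := B (a%:P * 'X^nu).

Lemma coef_ideal_is_ideal nu : is_ideal (coef_ideal nu).
Proof.
rewrite /coef_ideal; split; first by rewrite mul0r; exact: mem0.
split=> [x y Bx By | a x Bx]; first by rewrite polyCD mulrDl; exact: memD.
by rewrite polyCM -mulrA; exact: mem_polyCM.
Qed.

Lemma coef_ideal_decr j k a : (j <= k)%N -> coef_ideal k a -> coef_ideal j a.
Proof.
move=> /subnK <-; elim: (k - j)%N => [|n IH] //.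
by rewrite addSn => /mem_monomial_pred; exact: IH.
Qed.

Lemma mem_coef_idealP p : B p <-> forall nu, (0 < nu)%N -> coef_ideal nu p`_nu.
Proof.
by split=> [Bp nu _ | ]; [exact: mem_homogeneous | exact: mem_of_homogeneous].
Qed.

Lemma coef_ideal_proper nu :
  (exists p, ~ B p) -> (0 < nu)%N -> ~ coef_ideal nu 1.
Proof.
move=> [p Bp] nu0 M1; apply: Bp; apply/mem_coef_idealP => k _.
have BX : B 'X by have := coef_ideal_decr nu0 M1; rewrite /coef_ideal mul1r expr1.
apply: mem_polyCM; elim: k => [|k IH]; first by rewrite expr0; have [] := B_subring.
by rewrite exprS; exact: memM.
Qed.

End GradedSubring.

Theorem mainTheorem4 (R : realType) (A : idomainType)
    (iota : {rmorphism R[i] -> A}) (m : A -> Prop) (B : {poly A} -> Prop) :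
  normal_affine_surface_with_point iota m ->
  affine_extension iota m B ->
  (* hat P is not the trivial extension S x G_a, i.e. B <> A[t] *)
  (exists p : {poly A}, ~ B p) ->
  vertical_Gm_extends iota B ->
  (exists M : nat -> A -> Prop,
      (forall nu, (0 < nu)%N -> is_primary_to m (M nu)) /\
      (forall nu, (0 < nu)%N -> forall a, M nu.+1 a -> M nu a) /\
      (forall p : {poly A}, B p <-> forall nu, (0 < nu)%N -> M nu p`_nu))
  /\ second_kind m B.
Proof.
move=> [_ [_ [_ [m_max _]]]] [B_sub [B_const [_ [_ [B_shift B_loc]]]]] B_ne B_scale.
have M_ideal := coef_ideal_is_ideal B_sub B_const.
have M_decr := @coef_ideal_decr _ _ iota _ B_sub B_const B_scale B_shift.
have B_coefs := @mem_coef_idealP _ _ iota _ B_sub B_const B_scale.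
have M_primary nu : (0 < nu)%N -> is_primary_to m (coef_ideal B nu).
  move=> nu0; apply: (primary_to_maximal m_max (M_ideal nu)).
    by move=> f /B_loc/(_ 'X^nu) [n Bn]; exists n.
  exact: (@coef_ideal_proper _ _ iota _ B_sub B_const B_scale B_shift _ B_ne nu0).
split.
  by exists (coef_ideal B); split=> //; split=> // nu _ a; apply: M_decr.
move=> b Bb nu nu0; have [_ [_ [_ m_radM]]] := M_primary nu nu0.
by apply/m_radM; exists 1%N; rewrite expr1; exact: (proj1 (B_coefs b) Bb).
Qed.
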